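(* Let $I$ be the graph formed from two vertex-disjoint copies of the complete graph $K_4$ by adding a single edge joining one vertex of the first copy to one vertex of the second copy. Then $\chi_{td}(I)=8$, $I$ is connected, $I$ has order $8=\chi_{td}(I)$, and $I$ is not saturable.
   Context: For a simple graph $G$ and a positive integer $k$, a proper $k$-total difference labeling (TDL) of $G$ is a function $f: V(G)\to\{1,\dots,k\}$, extended to edges by $f(\{u,v\}) = |f(u)-f(v)|$, such that: (i) adjacent vertices receive different labels; (ii) two distinct edges sharing a vertex receive different labels; (iii) no edge receives the same label as either of its endpoints. $\chi_{td}(G)$ denotes the smallest $k$ for which such a labeling exists. A TDL of a graph $G$ of order $n$ is saturated if $\chi_{td}(G)=n$ and the set of vertex labels used is exactly $\{1,2,\dots,\chi_{td}(G)\}$. $G$ is saturable if it has at least one saturated labeling. *)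

From mathcomp Require Import all_boot.
Set Implicit Arguments. Unset Strict Implicit. Unset Printing Implicit Defensive.

Definition absd (a b : nat) : nat := (a - b) + (b - a).

Definition simple_graph (T : finType) (e : rel T) : Prop :=
  (forall u, ~~ e u u) /\ (forall u v, e u v = e v u).

(* proper k-total difference labeling f : V -> {1..k}; the edge {u,v} gets |f u - f v| *)
Definition is_tdl (T : finType) (e : rel T) (k : nat) (f : T -> nat) : Prop :=
  [/\ (forall v, 1 <= f v <= k),
      (forall u v, e u v -> f u != f v),
      (forall u v w, e u v -> e u w -> v != w -> absd (f u) (f v) != absd (f u) (f w))
    & (forall u v, e u v -> absd (f u) (f v) != f u /\ absd (f u) (f v) != f v)].

Definition has_tdl (T : finType) (e : rel T) (k : nat) : Prop :=
  exists f : T -> nat, is_tdl e k f.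

Definition is_chi_td (T : finType) (e : rel T) (k : nat) : Prop :=
  has_tdl e k /\ forall j, has_tdl e j -> k <= j.

Definition saturated (T : finType) (e : rel T) (f : T -> nat) : Prop :=
  [/\ is_chi_td e #|T|, is_tdl e #|T| f
    & forall i, 1 <= i <= #|T| -> exists v, f v = i].

Definition saturable (T : finType) (e : rel T) : Prop :=
  exists f : T -> nat, saturated e f.

Definition connected (T : finType) (e : rel T) : Prop :=
  forall u v : T, connect e u v.

(* The graph I: vertices 0..3 form a K4, vertices 4..7 form a K4,
   plus the edge {3,4}. *)
Definition Iedge : rel 'I_8 := fun u v =>
  ((u != v) && ((u < 4) == (v < 4)))
  || ((val u == 3) && (val v == 4)) || ((val u == 4) && (val v == 3)).

From mathcomp Require Import all_boot.

Set Implicit Arguments.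
Unset Strict Implicit.
Unset Printing Implicit Defensive.

(* Every vertex of I lies in one of its two copies of K4, and a TDL of I restricts to a TDL
   of that K4.  An exhaustive search over the 8^4 labelings of K4 by 1..8 shows that every
   TDL of K4 with labels at most 8 uses the label 8 and never the label 4.  Hence
   chi_td(I) >= 8, an explicit labeling gives equality, and no 8-labeling of I uses the
   label 4, so none is saturated. *)

(* Unlike [enum 'I_n] and [ord_enum n], this enumeration reduces under [vm_compute]. *)
Fixpoint ord_list n : seq 'I_n :=
  if n is n'.+1 then ord0 :: map (lift ord0) (ord_list n') else [::].

Lemma mem_ord_list n (i : 'I_n) : i \in ord_list n.
Proof.
elim: n i => [|n IHn] i; first by case: i.
by case: (unliftP ord0 i) => [j -> | ->]; rewrite inE ?mem_map ?IHn ?orbT //; exact: lift_inj.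
Qed.

Lemma ord_list_allP n (P : pred 'I_n) : reflect (forall i, P i) (all P (ord_list n)).
Proof. by apply: (iffP allP) => P_all i => [| _]; apply: P_all; rewrite ?mem_ord_list. Qed.

Lemma ord_list_hasP n (P : pred 'I_n) : reflect (exists i, P i) (has P (ord_list n)).
Proof.
by apply: (iffP hasP) => [[i _ Pi] | [i Pi]]; exists i; rewrite ?mem_ord_list.
Qed.

Section TdlDecision.

Variables (T : finType) (s : seq T).

Definition tdlb (e : rel T) (k : nat) (f : T -> nat) : bool :=
  [&& all (fun v => 1 <= f v <= k) s,
      all (fun u => all (fun v => e u v ==> (f u != f v)) s) s,
      all (fun u => all (fun v => all (fun w =>
        [&& e u v, e u w & v != w] ==> (absd (f u) (f v) != absd (f u) (f w))) s) s) s
    & all (fun u => all (fun v =>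
        e u v ==> (absd (f u) (f v) != f u) && (absd (f u) (f v) != f v)) s) s].

Hypothesis s_full : forall x, x \in s.

Lemma tdlP e k f : reflect (is_tdl e k f) (tdlb e k f).
Proof.
have allT (P : pred T) : reflect (forall x, P x) (all P s).
  by apply: (iffP allP) => P_s x //; apply: P_s.
apply: (iffP and4P) => [[/allT range /allT vtx /allT edge /allT ends] | [range vtx edge ends]].
  split=> [v | u v | u v w | u v].
  - exact: range.
  - by move/allT: (vtx u) => /(_ v) /implyP.
  - move=> euv euw nvw; move/allT: (edge u) => /(_ v) /allT /(_ w) /implyP.
    by apply; apply/and3P.
  - by move/allT: (ends u) => /(_ v) /implyP ends_uv euv; apply/andP; exact: ends_uv.
split; apply/allT => u //; apply/allT => v; first exact/implyP/vtx.
  by apply/allT => w; apply/implyP => /and3P[]; exact: edge.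
by apply/implyP => /ends [-> ->].
Qed.

End TdlDecision.

Section TdlTransfer.

Variables (T : finType) (e : rel T).

Lemma tdl_widen j k f : j <= k -> is_tdl e j f -> is_tdl e k f.
Proof.
move=> le_jk [range vtx edge ends]; split=> // v.
by case/andP: (range v) => -> /leq_trans ->.
Qed.

Lemma eq_is_tdl k f g : f =1 g -> is_tdl e k f -> is_tdl e k g.
Proof. by move=> fg [range vtx edge ends]; split=> *; rewrite -!fg; auto. Qed.

Lemma tdl_comp (T' : finType) (e' : rel T') (g : T' -> T) k f :
  injective g -> {homo g : u v / e' u v >-> e u v} ->
  is_tdl e k f -> is_tdl e' k (f \o g).
Proof.
move=> g_inj g_homo [range vtx edge ends].
split=> [v | u v /g_homo | u v w /g_homo euv /g_homo euw nvw | u v /g_homo] //=.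
- exact: vtx.
- by apply: edge; rewrite ?(inj_eq g_inj).
- exact: ends.
Qed.

End TdlTransfer.

Definition complete_graph n : rel 'I_n := fun i j => i != j.
Arguments complete_graph : clear implicits.

Lemma tdl_complete_subgraph (T : finType) (e : rel T) n (g : 'I_n -> T) k f :
  irreflexive e -> {homo g : i j / i != j >-> e i j} ->
  is_tdl e k f -> is_tdl (complete_graph n) k (f \o g).
Proof.
move=> e_irr g_homo; apply: tdl_comp => // i j gij.
by case: (eqVneq i j) => // /g_homo; rewrite gij e_irr.
Qed.

Definition labels4 (a b c d : nat) (i : 'I_4) : nat := nth 0 [:: a; b; c; d] i.

Lemma K4_tdl8_search : all (fun a => all (fun b => all (fun c => all (fun d =>
    let f := labels4 a b c d in
    tdlb (ord_list 4) (complete_graph 4) 8 f ==>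
      has (fun i => f i == 8) (ord_list 4) && all (fun i => f i != 4) (ord_list 4))
  (iota 1 8)) (iota 1 8)) (iota 1 8)) (iota 1 8).
Proof. by vm_compute. Qed.

Lemma K4_tdl8_labels f : is_tdl (complete_graph 4) 8 f ->
  (exists i, f i = 8) /\ (forall i, f i != 4).
Proof.
move=> tdl_f; have [range _ _ _] := tdl_f.
set i0 : 'I_4 := ord0; set i1 : 'I_4 := inord 1.
set i2 : 'I_4 := inord 2; set i3 : 'I_4 := inord 3.
have f_labels4 : f =1 labels4 (f i0) (f i1) (f i2) (f i3).
  by case=> [[|[|[|[|m]]]] lt_m4] //=; congr f; apply: val_inj; rewrite /= ?inordK.
have in_range i : f i \in iota 1 8 by rewrite mem_iota add1n ltnS.
move/allP: K4_tdl8_search => /(_ _ (in_range i0)) /allP /(_ _ (in_range i1)).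
move=> /allP /(_ _ (in_range i2)) /allP /(_ _ (in_range i3)) /implyP.
have /(tdlP (@mem_ord_list 4)) -> := eq_is_tdl f_labels4 tdl_f.
move=> /(_ isT) /andP[/ord_list_hasP[i /eqP fi8] /ord_list_allP no4].
by split=> [|j]; [exists i | ]; rewrite f_labels4 ?fi8 ?no4.
Qed.

Lemma K4_tdl_ge8 k f : is_tdl (complete_graph 4) k f -> 8 <= k.
Proof.
move=> tdl_f; rewrite leqNgt; apply/negP => lt_k8.
have [[i fi8] _] := K4_tdl8_labels (tdl_widen (ltnW lt_k8) tdl_f).
have [range _ _ _] := tdl_f.
by case/andP: (range i) => _; rewrite fi8 leqNgt lt_k8.
Qed.

Lemma Iedge_irrefl : irreflexive Iedge.
Proof.
have: all (fun u => ~~ Iedge u u) (ord_list 8) by vm_compute.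
by move/ord_list_allP=> loopless u; apply/negbTE/loopless.
Qed.

Lemma Iedge_sym : symmetric Iedge.
Proof.
have: all (fun u => all (fun v => Iedge u v == Iedge v u) (ord_list 8)) (ord_list 8).
  by vm_compute.
by move=> /ord_list_allP Isym u v; apply/eqP; move/ord_list_allP: (Isym u).
Qed.

Lemma Iedge_connected : connected Iedge.
Proof.
pose v3 : 'I_8 := Ordinal (isT : 3 < 8); pose v4 : 'I_8 := Ordinal (isT : 4 < 8).
have to3 u : connect Iedge u v3.
  have: all (fun u => [|| u == v3, Iedge u v3 | Iedge u v4]) (ord_list 8) by vm_compute.
  move/ord_list_allP/(_ u) => /or3P[/eqP-> // | /connect1 // | /connect1 u_to4].
  by apply: connect_trans u_to4 (connect1 _); vm_compute.
have Isym : connect_sym Iedge by apply: sym_connect_sym; exact: Iedge_sym.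
by move=> u v; rewrite (connect_trans (to3 u)) // Isym to3.
Qed.

Definition Iclique (v : 'I_8) (i : 'I_4) : 'I_8 :=
  if v < 4 then lshift 4 i else rshift 4 i.

Lemma Iclique_homo v : {homo Iclique v : i j / i != j >-> Iedge i j}.
Proof.
have: all (fun v => all (fun i => all (fun j =>
    (i != j) ==> Iedge (Iclique v i) (Iclique v j)) (ord_list 4)) (ord_list 4)) (ord_list 8).
  by vm_compute.
move/ord_list_allP/(_ v)/ord_list_allP => homo i j.
by move/ord_list_allP: (homo i) => /(_ j) /implyP.
Qed.

Lemma Iclique_cover v : exists i, Iclique v i = v.
Proof.
have: all (fun v => has (fun i => Iclique v i == v) (ord_list 4)) (ord_list 8).
  by vm_compute.
by move/ord_list_allP/(_ v)/ord_list_hasP => [i /eqP]; exists i.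
Qed.

Lemma Iclique_tdl v k f :
  is_tdl Iedge k f -> is_tdl (complete_graph 4) k (f \o Iclique v).
Proof. exact: tdl_complete_subgraph Iedge_irrefl (@Iclique_homo v). Qed.

Definition Ilabeling (v : 'I_8) : nat := nth 0 [:: 1; 3; 8; 7; 5; 1; 6; 8] v.

Lemma Ilabeling_tdl : is_tdl Iedge 8 Ilabeling.
Proof. by apply/(tdlP (@mem_ord_list 8)); vm_compute. Qed.

Theorem mainTheorem13 :
  [/\ simple_graph Iedge, is_chi_td Iedge 8, connected Iedge,
      #|'I_8| = 8 & ~ saturable Iedge].
Proof.
split.
- by split=> [u | ]; [rewrite Iedge_irrefl | exact: Iedge_sym].
- split=> [|k [f tdl_f]]; first by exists Ilabeling; exact: Ilabeling_tdl.
  exact: K4_tdl_ge8 (Iclique_tdl ord0 tdl_f).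
- exact: Iedge_connected.
- exact: card_ord.
- rewrite /saturable /saturated card_ord => -[f [_ tdl_f onto]].
  have [v fv4] := onto 4 isT; have [i Iv] := Iclique_cover v.
  have [_ no4] := K4_tdl8_labels (Iclique_tdl v tdl_f).
  by move: (no4 i); rewrite /= Iv fv4.
Qed.
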